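(* Assume hypotheses (A) and (B) and that $p_{ij}=p<1/(d-1)$ for all $i\ne j$. Let $q=p/(1-(d-2)p)$. Let $\gamma=(\gamma_1,\dots,\gamma_d)$ satisfy $0<\gamma_i<\mu_i/\nu_i-1$ for all $i$ and $$\sum_{j=1}^d\frac{\max_{1\le i\le d}\log(1+q\gamma_i)-\log(1+q\gamma_j)}{\log(1+\gamma_j)-\log(1+q\gamma_j)}<1.$$ Then the function $h_\gamma(x)=\sum_{i=1}^d(1+\gamma_i)^{x^i}(1+q\gamma_i)^{\sum_{j\ne i}x^j}$ satisfies $$\limsup_{|x|\to\infty}\frac{\mathcal{L}h_\gamma(x)}{h_\gamma(x)}=-\Bigl(1-\frac{(d-1)p^2}{1-(d-2)p}\Bigr)\min_{1\le i\le d}\gamma_i\Bigl(\frac{\mu_i}{1+\gamma_i}-\nu_i\Bigr)<0.$$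
   Context: Jackson network with $d$ queues: arrival rates $\lambda_i\ge0$, service rates $\mu_i>0$, routing matrix $P=(p_{ij})_{i,j=1}^d$ nonnegative with $p_{ii}=0$, $\sum_jp_{ij}\le1$, $p_{i0}=1-\sum_jp_{ij}$. With $\epsilon^i$ the unit vectors, $q(\epsilon^i)=\lambda_i$, $q(-\epsilon^i)=\mu_ip_{i0}$, $q(\epsilon^j-\epsilon^i)=\mu_ip_{ij}$, zero otherwise (this jump kernel, not the scalar $q$ of the claim); the process on $\mathbb{Z}_+^d$ has generator $\mathcal{L}f(y)=\sum_{z\in\mathbb{Z}_+^d}q(z-y)(f(z)-f(y))$. Hypothesis (A): this kernel is irreducible on $\mathbb{Z}^d$ (equivalently spectral radius of $P$ $<1$ and for every $i$ some $\lambda_jp^{(n)}_{ji}>0$); then the traffic equations $\nu_j=\lambda_j+\sum_i\nu_ip_{ij}$ have a unique solution with $\nu_i>0$. Hypothesis (B): $\nu_i<\mu_i$ for all $i$. *)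

From HB Require Import structures.
From mathcomp Require Import all_boot all_order all_algebra.
From mathcomp Require Import all_classical all_reals all_analysis.
From Stdlib Require Import Relations.
Set Implicit Arguments. Unset Strict Implicit. Unset Printing Implicit Defensive.
Import Order.TTheory GRing.Theory Num.Theory.
Local Open Scope ring_scope.

Section Jackson.
Variables (R : realType) (d : nat).
Variables (lam mu : 'I_d -> R) (P : 'I_d -> 'I_d -> R).

Definition pexit (i : 'I_d) : R := 1 - \sum_(j < d) P i j.

Definition unitv (i : 'I_d) : 'rV[int]_d := delta_mx 0 i.

Definition jkernel (z : 'rV[int]_d) : R :=
  \sum_(i < d) (z == unitv i)%:R * lam i
  + \sum_(i < d) (z == - unitv i)%:R * (mu i * pexit i)
  + \sum_(i < d) \sum_(j < d | j != i) (z == unitv j - unitv i)%:R * (mu i * P i j).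

Definition kernel_irreducible : Prop :=
  forall y z : 'rV[int]_d,
    clos_refl_trans _ (fun a b => 0 < jkernel (b - a)) y z.

Definition incr (y : 'I_d -> nat) (i : 'I_d) : 'I_d -> nat :=
  fun k => (y k + (k == i))%N.
Definition decr (y : 'I_d -> nat) (i : 'I_d) : 'I_d -> nat :=
  fun k => (y k - (k == i))%N.

(* generator  L f(y) = sum_{z in Z_+^d} q(z - y) (f z - f y), written out:
   the only z in Z_+^d with q(z-y) <> 0 are y+e_i, y-e_i (if y_i > 0) and
   y+e_j-e_i (j <> i, if y_i > 0). *)
Definition gen (f : ('I_d -> nat) -> R) (y : 'I_d -> nat) : R :=
  \sum_(i < d) lam i * (f (incr y i) - f y)
  + \sum_(i < d) (0 < y i)%N%:R * (mu i * pexit i) * (f (decr y i) - f y)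
  + \sum_(i < d) \sum_(j < d | j != i)
      (0 < y i)%N%:R * (mu i * P i j) * (f (incr (decr y i) j) - f y).

Definition hgamma (q : R) (g : 'I_d -> R) (x : 'I_d -> nat) : R :=
  \sum_(i < d) (1 + g i) ^+ x i * (1 + q * g i) ^+ (\sum_(j < d | j != i) x j)%N.

Definition norm1 (x : 'I_d -> nat) : nat := (\sum_(i < d) x i)%N.

Definition limsup_infty_eq (f : ('I_d -> nat) -> R) (l : R) : Prop :=
  (forall e : R, 0 < e -> exists N : nat,
      forall x, (N <= norm1 x)%N -> f x <= l + e) /\
  (forall e : R, 0 < e -> forall N : nat,
      exists x, (N <= norm1 x)%N /\ l - e <= f x).

End Jackson.

(* Since the routing is symmetric, [h_gamma] is a sum of product-form functions
   [f_i(x) = (1+g_i)^{x_i} (1+q g_i)^{|x| - x_i}], and [q] is precisely the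
   value for which the generator maps each [f_i] to a multiple of itself:
   [L f_i = r_i(x) f_i], with [r_i = c g_i nu_i >= 0] if queue [i] is empty and
   [r_i = - c g_i (mu_i / (1+g_i) - nu_i) < 0] otherwise.  So [L h / h] is an
   [f]-weighted average of the [r_i].  Concentrating [x] on one queue shows the
   limsup is at least the largest negative rate.  Conversely, the condition on
   the logarithms makes some [f_k(x)] exceed [exp (|x| (B + delta))], whereas
   every [f_i] with [x_i = 0] is at most [exp (|x| B)]; so the components with a
   nonnegative rate carry an exponentially small share of [h]. *)

From HB Require Import structures.
From mathcomp Require Import all_boot all_order all_algebra.
From mathcomp Require Import all_classical all_reals all_analysis.
From mathcomp Require Import ring lra.
Import Order.TTheory GRing.Theory Num.Theory.
Set Implicit Arguments. Unset Strict Implicit. Unset Printing Implicit Defensive.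
Local Open Scope ring_scope.

Section Generator.
Variables (R : realType) (d : nat) (lam mu : 'I_d -> R) (P : 'I_d -> 'I_d -> R).

Lemma gen_sum (fs : 'I_d -> ('I_d -> nat) -> R) y :
  gen lam mu P (fun z => \sum_(i < d) fs i z) y
  = \sum_(i < d) gen lam mu P (fs i) y.
Proof.
rewrite /gen !big_split /=; congr (_ + _ + _); rewrite exchange_big /=;
  apply: eq_bigr => k _; last (rewrite exchange_big /=; apply: eq_bigr => j _);
  by rewrite -sumrB mulr_sumr.
Qed.

Definition prod_pow (F : 'I_d -> R) (x : 'I_d -> nat) := \prod_(m < d) F m ^+ x m.

Lemma incrK (y : 'I_d -> nat) k : (0 < y k)%N -> incr (decr y k) k = y.
Proof.
move=> yk; apply/funext => m; rewrite /incr /decr.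
by case: eqVneq => [->|_]; rewrite ?subn0 ?addn0 // addn1 subn1 prednK.
Qed.

Lemma prod_pow_incr F y k : prod_pow F (incr y k) = prod_pow F y * F k.
Proof.
rewrite /prod_pow /incr; under eq_bigr do rewrite exprD.
rewrite big_split /=; congr (_ * _).
by rewrite (bigD1 k) //= eqxx expr1 big1 ?mulr1 // => m /negbTE ->.
Qed.

Lemma prod_pow_decr F y k : F k != 0 -> (0 < y k)%N ->
  prod_pow F (decr y k) = prod_pow F y / F k.
Proof. by move=> Fk yk; rewrite -[in RHS](incrK yk) prod_pow_incr mulfK. Qed.

Lemma gen_prod_pow F y : (forall m, F m != 0) ->
  gen lam mu P (prod_pow F) y = prod_pow F y *
  (\sum_(k < d) lam k * (F k - 1)
   + \sum_(k < d) (0 < y k)%N%:R * (mu k / F k) *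
       (pexit P k * (1 - F k) + \sum_(j < d | j != k) P k j * (F j - F k))).
Proof.
move=> F0; rewrite /gen -addrA mulrDr; congr (_ + _).
  by rewrite mulr_sumr; apply: eq_bigr => k _; rewrite prod_pow_incr; ring.
rewrite mulr_sumr -big_split; apply: eq_bigr => k _ /=.
have [yk0|yk] /= := posnP (y k).
  by rewrite !mul0r mulr0 add0r big1 // => j _; rewrite !mul0r.
rewrite prod_pow_decr // mul1r [in RHS]mulrA [in RHS]mulrDr [in RHS]mulr_sumr.
congr (_ + _).
  by field.
by apply: eq_bigr => j _; rewrite prod_pow_incr prod_pow_decr //; field.
Qed.

End Generator.

Lemma sum_neq (R : realType) d (F : 'I_d -> R) k :
  \sum_(j < d | j != k) F j = \sum_(j < d) F j - F k.
Proof. by rewrite [\sum_(j < d) F j](bigD1 k) //= addrC addrK. Qed.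

Definition qcoef (R : realType) d (p : R) := p / (1 - (d%:R - 2) * p).
Definition drift_factor (R : realType) d (p : R) :=
  1 - (d%:R - 1) * p ^+ 2 / (1 - (d%:R - 2) * p).

Section HGamma.
Variables (R : realType) (d : nat) (q : R) (g : 'I_d -> R).

Definition hfactor (i m : 'I_d) : R := if m == i then 1 + g i else 1 + q * g i.

Lemma prod_pow_hfactor i x : prod_pow (hfactor i) x
  = (1 + g i) ^+ x i * (1 + q * g i) ^+ (\sum_(j < d | j != i) x j)%N.
Proof.
rewrite /prod_pow (bigD1 i) //= /hfactor eqxx; congr (_ * _).
by rewrite -prodrXr; apply: eq_bigr => m /negbTE ->.
Qed.

Lemma hgammaE : hgamma q g = fun x => \sum_(i < d) prod_pow (hfactor i) x.
Proof. by apply/funext => x; apply: eq_bigr => i _; rewrite prod_pow_hfactor. Qed.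

Lemma hfactor_neq0 : (forall i, 1 + g i != 0) -> (forall i, 1 + q * g i != 0) ->
  forall i m, hfactor i m != 0.
Proof. by move=> g0 qg0 i m; rewrite /hfactor; case: ifP. Qed.

End HGamma.

Section SymmetricRouting.
Variables (R : realType) (d : nat) (lam mu nu : 'I_d -> R).
Variables (P : 'I_d -> 'I_d -> R) (p : R) (g : 'I_d -> R).
Hypothesis P_diag : forall i, P i i = 0.
Hypothesis P_offdiag : forall i j, i != j -> P i j = p.
Hypothesis traffic : forall j, nu j = lam j + \sum_(i < d) nu i * P i j.
Hypothesis den_neq0 : 1 - (d%:R - 2) * p != 0.
Hypothesis g_neq0 : forall i, 1 + g i != 0.
Hypothesis qg_neq0 : forall i, 1 + qcoef d p * g i != 0.

Local Notation q := (qcoef d p).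
Local Notation c := (drift_factor d p).

Lemma sum_P_row k : \sum_(j < d) P k j = (d%:R - 1) * p.
Proof.
rewrite (bigD1 k) //= P_diag add0r (eq_bigr (fun _ => p)).
  by rewrite sum_neq sumr_const card_ord; ring.
by move=> j jk; rewrite P_offdiag // eq_sym.
Qed.

Lemma lamE j : lam j = nu j - p * (\sum_(i < d) nu i - nu j).
Proof.
rewrite -sum_neq mulr_sumr {1}[nu j]traffic (bigD1 j) //= P_diag mulr0 add0r.
rewrite (eq_bigr (fun i => p * nu i)) ?addrK // => i ij.
by rewrite P_offdiag // mulrC.
Qed.

Lemma sum_lam : \sum_(j < d) lam j = (1 - (d%:R - 1) * p) * \sum_(i < d) nu i.
Proof.
under eq_bigr do rewrite lamE.
by rewrite sumrB -mulr_sumr sumrB sumr_const card_ord -mulr_natl; ring.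
Qed.

(* With equal factors on the other queues, [q] is the value for which routing
   between them balances exits, so only queue [i] itself has a net drift. *)
Lemma departure_drift i k :
  pexit P k * (1 - hfactor q g i k)
  + \sum_(j < d | j != k) P k j * (hfactor q g i j - hfactor q g i k)
  = if k == i then - (c * g i) else 0.
Proof.
have sum_hfactor : \sum_(m < d) hfactor q g i m = 1 + g i + (d%:R - 1) * (1 + q * g i).
  rewrite (bigD1 i) //= /hfactor eqxx (eq_bigr (fun _ => 1 + q * g i)).
    by rewrite sum_neq sumr_const card_ord; ring.
  by move=> m /negbTE ->.
rewrite /pexit sum_P_row (eq_bigr (fun j => p * (hfactor q g i j - hfactor q g i k))).
  rewrite sum_neq subrr mulr0 subr0 -mulr_sumr sumrB sum_hfactor sumr_const card_ord.
  by rewrite -mulr_natl /hfactor /drift_factor /qcoef; case: ifP => _; field.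
by move=> j jk; rewrite P_offdiag // eq_sym.
Qed.

Lemma arrival_drift i : \sum_(k < d) lam k * (hfactor q g i k - 1) = c * g i * nu i.
Proof.
rewrite (bigD1 i) //= {1}/hfactor eqxx (eq_bigr (fun k => lam k * (q * g i))).
  by rewrite -mulr_suml sum_neq sum_lam lamE /drift_factor /qcoef; field.
by move=> k /negbTE ki; rewrite /hfactor ki; ring.
Qed.

Lemma gen_hgamma y : gen lam mu P (hgamma q g) y =
  \sum_(i < d) prod_pow (hfactor q g i) y *
    (c * g i * (nu i - (0 < y i)%N%:R * (mu i / (1 + g i)))).
Proof.
rewrite hgammaE gen_sum; apply: eq_bigr => i _.
rewrite gen_prod_pow; last exact: hfactor_neq0.
congr (_ * _); rewrite arrival_drift.
under eq_bigr do rewrite departure_drift.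
rewrite (bigD1 i) //= eqxx big1 ?addr0 => [|k /negbTE ->]; last by rewrite mulr0.
by rewrite /hfactor eqxx; field.
Qed.

End SymmetricRouting.

Section Analytic.
Variable R : realType.

Lemma exists_le_of_sum_div (I : finType) (i0 : I) (a w x : I -> R) :
  (forall k, 0 < w k) -> \sum_k a k / w k <= \sum_k x k ->
  exists k, a k <= w k * x k.
Proof.
move=> w0 hsum; apply/not_existsP => hlt; move: hsum; apply/negP; rewrite -ltNge.
apply: ltr_sum => [|k _]; first by apply/hasP; exists i0; rewrite ?mem_index_enum.
by rewrite ltr_pdivlMr // mulrC ltNge; apply/negP/hlt.
Qed.

Lemma expR_neg_le_eventually (de e : R) : 0 < de -> 0 < e ->
  exists N : nat, forall s : R, N%:R <= s -> expR (- (s * de)) <= e.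
Proof.
move=> de0 e0; exists (Num.bound (1 / (e * de))) => s sN.
have ede0 : 0 < e * de by exact: mulr_gt0.
have hs : 1 < e * (s * de).
  have := lt_le_trans (archi_boundP (ltW (divr_gt0 ltr01 ede0))) sN.
  by rewrite ltr_pdivrMr // mulrCA mulrA.
rewrite expRN -div1r ler_pdivrMr ?expR_gt0 //.
have := ler_wpM2l (ltW e0) (expR_ge1Dx (s * de)); rewrite mulrDr mulr1; lra.
Qed.

Lemma weighted_avg_le (I : finType) (f r : I -> R) (L K eta : R) :
  (forall i, 0 < f i) -> L <= K -> 0 <= eta ->
  (forall i, r i <= L \/ (r i <= K /\ f i <= eta * \sum_k f k)) ->
  \sum_i f i * r i <= (L + #|I|%:R * (K - L) * eta) * \sum_k f k.
Proof.
move=> f0 LK eta0 hr.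
have h0 : 0 <= \sum_k f k by apply: sumr_ge0 => k _; exact: ltW.
have term i : f i * r i <= L * f i + (K - L) * (eta * \sum_k f k).
  have fi0 := ltW (f0 i); have KL0 : 0 <= K - L by rewrite subr_ge0.
  case: (hr i) => [hi|[hi hf]].
    have := ler_wpM2l fi0 hi; have := mulr_ge0 KL0 (mulr_ge0 eta0 h0); lra.
  have := ler_wpM2l fi0 hi; have := ler_wpM2l KL0 hf; rewrite mulrBl; lra.
apply: le_trans (ler_sum _ (fun i _ => term i)) _.
rewrite big_split /= -mulr_sumr sumr_const -[_ *+ _]mulr_natl le_eqVlt.
by apply/orP; left; apply/eqP; ring.
Qed.

End Analytic.

Section FiniteRange.
Variables (R : realType) (I : finType) (f : I -> R).

Lemma sup_range_finite (i0 : I) :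
  exists2 i, sup (range f) = f i & forall j, f j <= f i.
Proof.
case: (@real_arg_maxP R I i0 xpredT f) => // [j _|i _ fi]; first exact: num_real.
have fi_max j : f j <= f i by exact: fi.
exists i => //; apply/eqP; rewrite eq_le; apply/andP; split.
- by apply: ge_sup; [exists (f i), i | move=> _ [j _ <-]].
- apply: sup_upper_bound; last by exists i.
  by split; [exists (f i), i | exists (f i) => _ [j _ <-]].
Qed.

Lemma inf_range_finite (i0 : I) :
  exists2 i, inf (range f) = f i & forall j, f i <= f j.
Proof.
case: (@real_arg_minP R I i0 xpredT f) => // [j _|i _ fi]; first exact: num_real.
have fi_min j : f i <= f j by exact: fi.
exists i => //; apply/eqP; rewrite eq_le; apply/andP; split.
- by apply: ge_inf; [exists (f i) => _ [j _ <-] | exists i].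
- by apply: lb_le_inf; [exists (f i), i | move=> _ [j _ <-]].
Qed.

End FiniteRange.

Section Corollary.
Variables (R : realType) (d : nat) (lam mu nu : 'I_d -> R).
Variables (P : 'I_d -> 'I_d -> R) (p : R) (gamma : 'I_d -> R).
Hypothesis d_ge2 : (2 <= d)%N.
Hypothesis P_ge0 : forall i j, 0 <= P i j.
Hypothesis P_diag : forall i, P i i = 0.
Hypothesis P_offdiag : forall i j, i != j -> P i j = p.
Hypothesis traffic : forall j, nu j = lam j + \sum_(i < d) nu i * P i j.
Hypothesis nu_gt0 : forall i, 0 < nu i.
Hypothesis p_lt : p < 1 / (d%:R - 1).
Hypothesis gamma_bounds : forall i, 0 < gamma i /\ gamma i < mu i / nu i - 1.

Local Notation q := (qcoef d p).
Local Notation c := (drift_factor d p).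
Local Notation h := (hgamma q gamma).
Local Notation f i := (prod_pow (hfactor q gamma i)).
Local Notation G i := (gamma i * (mu i / (1 + gamma i) - nu i)).

Let i0 : 'I_d := Ordinal (ltnW d_ge2).

Lemma p_ge0 : 0 <= p.
Proof.
pose i1 : 'I_d := Ordinal d_ge2.
by rewrite -(P_offdiag (_ : i0 != i1)) // -val_eqE.
Qed.

Lemma dm1_gt0 : 0 < d%:R - 1 :> R.
Proof. by rewrite subr_gt0 (ltr_nat R 1 d). Qed.

Lemma dm1_p_lt1 : (d%:R - 1) * p < 1.
Proof. by move: p_lt; rewrite ltr_pdivlMr ?dm1_gt0 // mulrC. Qed.

Lemma den_gt0 : 0 < 1 - (d%:R - 2) * p.
Proof.
have := dm1_p_lt1; have := p_ge0.
have -> : (d%:R - 2) * p = (d%:R - 1) * p - p by ring.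
lra.
Qed.

Lemma qcoef_ge0 : 0 <= q.
Proof. by rewrite divr_ge0 ?p_ge0 // ltW ?den_gt0. Qed.

Lemma qcoef_lt1 : q < 1.
Proof.
rewrite /qcoef ltr_pdivrMr ?den_gt0 // mul1r.
have := dm1_p_lt1; have -> : (d%:R - 2) * p = (d%:R - 1) * p - p by ring.
lra.
Qed.

Lemma drift_factor_gt0 : 0 < c.
Proof.
rewrite /drift_factor subr_gt0 ltr_pdivrMr ?den_gt0 // mul1r.
have := ler_wpM2r p_ge0 (ltW dm1_p_lt1); rewrite mul1r.
have -> : 1 - (d%:R - 2) * p = 1 - (d%:R - 1) * p + p by ring.
rewrite expr2 mulrA; have := dm1_p_lt1; lra.
Qed.

Lemma gamma_gt0 i : 0 < gamma i. Proof. by case: (gamma_bounds i). Qed.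

Lemma one_add_gamma_gt0 i : 0 < 1 + gamma i.
Proof. by have := gamma_gt0 i; lra. Qed.

Lemma one_add_qgamma_gt0 i : 0 < 1 + q * gamma i.
Proof. by have := mulr_ge0 qcoef_ge0 (ltW (gamma_gt0 i)); lra. Qed.

Lemma G_gt0 i : 0 < G i.
Proof.
have [g0 g1] := gamma_bounds i.
have : 1 + gamma i < mu i / nu i by lra.
rewrite ltr_pdivlMr // => hmu.
by rewrite mulr_gt0 // subr_gt0 ltr_pdivlMr ?one_add_gamma_gt0 // mulrC.
Qed.

Lemma hcomp_gt0 i x : 0 < f i x.
Proof.
apply: prodr_gt0 => k _; apply: exprn_gt0; rewrite /hfactor.
by case: ifP => _; [exact: one_add_gamma_gt0 | exact: one_add_qgamma_gt0].
Qed.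

Lemma hgamma_sum x : h x = \sum_(i < d) f i x.
Proof. by rewrite hgammaE. Qed.

Lemma hcomp_le_hgamma i x : f i x <= h x.
Proof.
by rewrite hgamma_sum (bigD1 i) //= lerDl sumr_ge0 // => k _; exact: ltW (hcomp_gt0 k x).
Qed.

Lemma hgamma_gt0 x : 0 < h x.
Proof. exact: lt_le_trans (hcomp_gt0 i0 x) (hcomp_le_hgamma i0 x). Qed.

Definition rate x i :=
  c * gamma i * (nu i - (0 < x i)%N%:R * (mu i / (1 + gamma i))).

Lemma gen_hgamma_rate x : gen lam mu P h x = \sum_(i < d) f i x * rate x i.
Proof.
apply: gen_hgamma => // [|i|i]; rewrite lt0r_neq0 //.
- exact: den_gt0.
- exact: one_add_gamma_gt0.
- exact: one_add_qgamma_gt0.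
Qed.

Lemma rate_idle x i : x i = 0%N -> rate x i = c * gamma i * nu i.
Proof. by move=> xi; rewrite /rate xi mul0r subr0. Qed.

Lemma rate_busy x i : (0 < x i)%N -> rate x i = - c * G i.
Proof. by move=> xi; rewrite /rate xi /=; ring. Qed.

Local Notation ratio x := (gen lam mu P h x / h x).
Local Notation m := (inf (range (fun i => G i))).

Lemma ratio_sum x : ratio x = (\sum_(i < d) f i x * rate x i) / h x.
Proof. by rewrite gen_hgamma_rate. Qed.

Lemma idle_rate_ge0 i : 0 <= c * gamma i * nu i.
Proof.
by rewrite !mulr_ge0 // ltW ?drift_factor_gt0 ?gamma_gt0 ?nu_gt0.
Qed.

Lemma rate_idle_ge0 x i : x i = 0%N -> 0 <= rate x i.
Proof. by move=> xi; rewrite rate_idle ?idle_rate_ge0. Qed.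

(* A single busy queue [i]: every other component has a nonnegative rate. *)
Lemma ratio_single_busy i n :
  - c * G i <= ratio (fun k => if k == i then n.+1 else 0%N).
Proof.
set x := fun k => _; rewrite ratio_sum ler_pdivlMr ?hgamma_gt0 //.
rewrite (bigD1 i) //= rate_busy /x ?eqxx //.
have rest : 0 <= \sum_(k < d | k != i) f k x * rate x k.
  apply: sumr_ge0 => k /negbTE ki.
  by rewrite mulr_ge0 ?rate_idle_ge0 /x ?ki // ltW ?hcomp_gt0.
have cG : - c * G i <= 0.
  by rewrite mulNr oppr_le0 mulr_ge0 // ltW ?drift_factor_gt0 ?G_gt0.
have := ler_wnM2l cG (hcomp_le_hgamma i x); rewrite /x in rest *; lra.
Qed.

Lemma limsup_ratio_lower e N : 0 < e ->
  exists x, (N <= norm1 x)%N /\ - c * m - e <= ratio x.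
Proof.
move=> e0; have [i -> _] := inf_range_finite (fun i => G i) i0.
exists (fun k => if k == i then N.+1 else 0%N); split.
  by rewrite /norm1 (bigD1 i) //= eqxx big1 ?addn0 // => k /negbTE ->.
by apply: le_trans (ratio_single_busy i N); rewrite lerBlDr lerDl ltW.
Qed.

Local Notation be i := (ln (1 + q * gamma i)).
Local Notation w i := (ln (1 + gamma i) - ln (1 + q * gamma i)).
Local Notation B := (sup (range (fun i => be i))).

Hypothesis spread : \sum_(j < d) (B - be j) / w j < 1.

Lemma w_gt0 j : 0 < w j.
Proof.
rewrite subr_gt0 ltr_ln ?posrE ?one_add_gamma_gt0 ?one_add_qgamma_gt0 // ltrD2l.
by rewrite -[X in _ < X]mul1r ltr_pM2r ?gamma_gt0 ?qcoef_lt1.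
Qed.

Lemma be_le_sup j : be j <= B.
Proof. by have [k -> /(_ j)] := sup_range_finite (fun i => be i) i0. Qed.

Lemma ln_hcomp i x : ln (f i x) = be i * (norm1 x)%:R + w i * (x i)%:R.
Proof.
have a0 := one_add_gamma_gt0 i; have b0 := one_add_qgamma_gt0 i.
rewrite prod_pow_hfactor lnM ?posrE ?exprn_gt0 // !lnXn //.
have -> : norm1 x = (x i + \sum_(j < d | j != i) x j)%N by rewrite /norm1 (bigD1 i).
by rewrite natrD !mulr_natr; ring.
Qed.

(* The margin by which the spread condition holds, spread over the [1 / w j]. *)
Let de := (1 - \sum_(j < d) (B - be j) / w j) / \sum_(j < d) (w j)^-1.

Lemma sum_inv_w_gt0 : 0 < \sum_(j < d) (w j)^-1.
Proof.
rewrite (bigD1 i0) //= ltr_wpDr ?invr_gt0 ?w_gt0 //.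
by apply: sumr_ge0 => k _; rewrite invr_ge0 ltW ?w_gt0.
Qed.

Lemma de_gt0 : 0 < de.
Proof. by rewrite divr_gt0 ?subr_gt0 ?sum_inv_w_gt0. Qed.

(* The weights [(B - be k + de) / w k] sum to one, so some coordinate [x k]
   exceeds its share [|x| (B - be k + de) / w k]. *)
Lemma exists_dominant_hcomp x : exists k, (norm1 x)%:R * (B + de) <= ln (f k x).
Proof.
set s : R := (norm1 x)%:R.
have [|k hk] := @exists_le_of_sum_div _ _ i0 (fun k => s * (B - be k + de))
  (fun k => w k) (fun k => (x k)%:R) w_gt0.
  rewrite -natr_sum -/(norm1 x) -/s le_eqVlt; apply/orP; left; apply/eqP.
  transitivity (s * (\sum_(j < d) (B - be j) / w j + de * \sum_(j < d) (w j)^-1)).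
    rewrite mulrDr mulr_sumr [de * _]mulr_sumr mulr_sumr -big_split /=.
    by apply: eq_bigr => k _; field; rewrite lt0r_neq0 ?w_gt0.
  by rewrite /de divfK ?lt0r_neq0 ?sum_inv_w_gt0 // addrC subrK mulr1.
by exists k; rewrite ln_hcomp -/s; lra.
Qed.

Lemma idle_hcomp_small i x : x i = 0%N ->
  f i x <= h x * expR (- ((norm1 x)%:R * de)).
Proof.
move=> xi; have [k hk] := exists_dominant_hcomp x.
set s : R := (norm1 x)%:R in hk *.
apply: (@le_trans _ _ (f k x * expR (- (s * de)))); last first.
  by rewrite ler_wpM2r ?hcomp_le_hgamma // ltW ?expR_gt0.
rewrite -(lnK (hcomp_gt0 i x : f i x \in Num.pos)).
rewrite -(lnK (hcomp_gt0 k x : f k x \in Num.pos)) -expRD ler_expR.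
rewrite ln_hcomp xi mulr0 addr0 -/s.
have := ler_wpM2r (ler0n R (norm1 x)) (be_le_sup i); rewrite -/s; lra.
Qed.

Lemma drift_bound_lt0 : - c * m < 0.
Proof.
have [i -> _] := inf_range_finite (fun i => G i) i0.
by rewrite mulNr oppr_lt0 mulr_gt0 ?drift_factor_gt0 ?G_gt0.
Qed.

Lemma limsup_ratio_upper e : 0 < e ->
  exists N, forall x, (N <= norm1 x)%N -> ratio x <= - c * m + e.
Proof.
move=> e0; set L := - c * m; set K := \sum_(i < d) c * gamma i * nu i.
have [imin minE minP] := inf_range_finite (fun i => G i) i0.
have K0 : 0 <= K by apply: sumr_ge0 => i _; exact: idle_rate_ge0.
have KL : 0 < K - L by have := drift_bound_lt0; rewrite -/L; lra.
have dKL : 0 < d%:R * (K - L) by rewrite mulr_gt0 // ltr0n (ltnW d_ge2).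
have [N hN] := expR_neg_le_eventually de_gt0 (divr_gt0 e0 dKL).
exists N => x Nx; set eta := expR (- ((norm1 x)%:R * de)).
have eta_le : eta <= e / (d%:R * (K - L)) by apply: hN; rewrite ler_nat.
have hsplit i : rate x i <= L \/ (rate x i <= K /\ f i x <= eta * \sum_k f k x).
  have [xi|xi] := posnP (x i).
    right; split; last by rewrite mulrC -hgamma_sum; exact: idle_hcomp_small.
    rewrite rate_idle // /K (bigD1 i) //= lerDl.
    by apply: sumr_ge0 => k _; exact: idle_rate_ge0.
  by left; rewrite rate_busy // /L minE !mulNr lerN2 ler_pM2l ?drift_factor_gt0 ?minP.
have LK : L <= K by have := drift_bound_lt0; rewrite -/L; lra.
have := weighted_avg_le (fun i => hcomp_gt0 i x) LK (ltW (expR_gt0 _)) hsplit.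
rewrite card_ord -hgamma_sum ratio_sum ler_pdivrMr ?hgamma_gt0 // => /le_trans; apply.
by rewrite ler_pM2r ?hgamma_gt0 // lerD2l -ler_pdivlMl // [_^-1 * e]mulrC.
Qed.

Lemma limsup_ratio : limsup_infty_eq (fun x => ratio x) (- c * m) /\ - c * m < 0.
Proof.
split; last exact: drift_bound_lt0.
by split=> [e /limsup_ratio_upper|e e0 N]; last exact: limsup_ratio_lower.
Qed.

End Corollary.

Theorem corollary3p2 (R : realType) (d : nat)
  (lam mu : 'I_d -> R) (P : 'I_d -> 'I_d -> R) (nu : 'I_d -> R) (p : R)
  (gamma : 'I_d -> R) :
  (2 <= d)%N ->
  (forall i, 0 <= lam i) ->
  (forall i, 0 < mu i) ->
  (forall i j, 0 <= P i j) ->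
  (forall i, P i i = 0) ->
  (forall i, \sum_(j < d) P i j <= 1) ->
  (* hypothesis (A) *)
  kernel_irreducible lam mu P ->
  (* nu is the solution of the traffic equations *)
  (forall j, nu j = lam j + \sum_(i < d) nu i * P i j) ->
  (forall i, 0 < nu i) ->
  (* hypothesis (B) *)
  (forall i, nu i < mu i) ->
  (forall i j, i != j -> P i j = p) ->
  p < 1 / (d%:R - 1) ->
  let q := p / (1 - (d%:R - 2) * p) in
  (forall i, 0 < gamma i /\ gamma i < mu i / nu i - 1) ->
  \sum_(j < d)
     (sup (range (fun i => ln (1 + q * gamma i))) - ln (1 + q * gamma j))
     / (ln (1 + gamma j) - ln (1 + q * gamma j)) < 1 ->
  let L := - (1 - (d%:R - 1) * p ^+ 2 / (1 - (d%:R - 2) * p))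
             * inf (range (fun i => gamma i * (mu i / (1 + gamma i) - nu i))) in
  limsup_infty_eq
    (fun x => gen lam mu P (hgamma q gamma) x / hgamma q gamma x) L
  /\ L < 0.
Proof.
move=> d_ge2 _ _ P_ge0 P_diag _ _ traffic nu_gt0 _ P_offdiag p_lt q gamma_bounds spread.
exact: (limsup_ratio d_ge2 P_ge0 P_diag P_offdiag traffic nu_gt0 p_lt gamma_bounds
  spread).
Qed.
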